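(* Let $\mathcal{Y}=\sum_{k=1}^r\alpha_k\bigcirc_{\ell=1}^d\mathbf{y}^{(\ell)}_k\in\mathbb{C}^{n_1\times\cdots\times n_d}$ be a rank-$r$ tensor in standard form with basis coherence $\mu'_{\mathcal{Y}}<(r-1)^{-1}$. Then $$\|\boldsymbol\alpha\|_2^2\le\frac{1}{1-(r-1)\mu'_{\mathcal{Y}}}\|\mathcal{Y}\|^2\le\frac{1}{1-(r-1)\prod_{\ell=1}^d\mu_{\mathcal{Y},\ell}}\|\mathcal{Y}\|^2\le\frac{1}{1-(r-1)\mu_{\mathcal{Y}}^d}\|\mathcal{Y}\|^2 .$$
   Context: Tensors carry the inner product $\langle\mathcal{X},\mathcal{Y}\rangle=\sum\mathcal{X}_{i_1\dots i_d}\overline{\mathcal{Y}_{i_1\dots i_d}}$ and norm $\|\cdot\|$; $\bigcirc$ is the outer product. Standard form: $\|\mathbf{y}^{(\ell)}_k\|_2=1$ for all $\ell,k$; $\boldsymbol\alpha=(\alpha_k)_{k\in[r]}$. Relative to this representation, $\mu_{\mathcal{Y},\ell}=\max_{k\ne h}|\langle\mathbf{y}^{(\ell)}_k,\mathbf{y}^{(\ell)}_h\rangle|$, $\mu_{\mathcal{Y}}=\max_\ell\mu_{\mathcal{Y},\ell}$, and $\mu'_{\mathcal{Y}}=\max_{k\ne h}\prod_{\ell=1}^d|\langle\mathbf{y}^{(\ell)}_k,\mathbf{y}^{(\ell)}_h\rangle|$. *)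

From HB Require Import structures.
From mathcomp Require Import all_boot all_order all_algebra.
Set Implicit Arguments. Unset Strict Implicit. Unset Printing Implicit Defensive.
Import Order.TTheory GRing.Theory Num.Theory.
Local Open Scope ring_scope.

(* C : numClosedFieldType plays the role of the complex
   numbers (it includes the complex numbers; conjugation is Num.conj). *)

Section Tensors.
Variable C : numClosedFieldType.

Definition vdot (m : nat) (x y : 'I_m -> C) : C :=
  \sum_(j < m) x j * Num.conj (y j).

Definition multi_index (d : nat) (n : 'I_d -> nat) : finType :=
  {dffun forall l : 'I_d, 'I_(n l)}.

Definition tensor (d : nat) (n : 'I_d -> nat) := multi_index n -> C.

Definition tdot (d : nat) (n : 'I_d -> nat) (X Y : tensor n) : C :=
  \sum_(i : multi_index n) X i * Num.conj (Y i).

Definition tnorm2 (d : nat) (n : 'I_d -> nat) (X : tensor n) : C := tdot X X.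

Definition cpd (d : nat) (n : 'I_d -> nat) (r : nat) (alpha : 'I_r -> C)
  (y : forall l : 'I_d, 'I_r -> 'I_(n l) -> C) : tensor n :=
  fun i => \sum_(k < r) alpha k * \prod_(l < d) y l k (i l).

Definition has_cpd (d : nat) (n : 'I_d -> nat) (Y : tensor n) (s : nat) : Prop :=
  exists (beta : 'I_s -> C) (z : forall l : 'I_d, 'I_s -> 'I_(n l) -> C),
    forall i, Y i = cpd beta z i.

Definition tensor_rank_eq (d : nat) (n : 'I_d -> nat) (Y : tensor n) (r : nat) : Prop :=
  has_cpd Y r /\ forall s, (s < r)%N -> ~ has_cpd Y s.

Definition standard_form (d : nat) (n : 'I_d -> nat) (r : nat)
  (y : forall l : 'I_d, 'I_r -> 'I_(n l) -> C) : Prop :=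
  forall (l : 'I_d) (k : 'I_r), vdot (y l k) (y l k) = 1.

Definition vnorm2 (r : nat) (alpha : 'I_r -> C) : C := vdot alpha alpha.

(* mu_{Y,l} = max_{k<>h} |<y^{(l)}_k, y^{(l)}_h>|  (0 if r <= 1). *)
Definition mu_l (d : nat) (n : 'I_d -> nat) (r : nat)
  (y : forall l : 'I_d, 'I_r -> 'I_(n l) -> C) (l : 'I_d) : C :=
  \big[Num.max/0]_(k < r) \big[Num.max/0]_(h < r | h != k)
     `|vdot (y l k) (y l h)|.

(* mu_Y = max_l mu_{Y,l}  (0 if d = 0). *)
Definition mu (d : nat) (n : 'I_d -> nat) (r : nat)
  (y : forall l : 'I_d, 'I_r -> 'I_(n l) -> C) : C :=
  \big[Num.max/0]_(l < d) mu_l y l.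

(* mu'_Y = max_{k<>h} prod_l |<y^{(l)}_k, y^{(l)}_h>|  (0 if r <= 1). *)
Definition mu' (d : nat) (n : 'I_d -> nat) (r : nat)
  (y : forall l : 'I_d, 'I_r -> 'I_(n l) -> C) : C :=
  \big[Num.max/0]_(k < r) \big[Num.max/0]_(h < r | h != k)
     \prod_(l < d) `|vdot (y l k) (y l h)|.

End Tensors.

From HB Require Import structures.
From mathcomp Require Import all_boot all_order all_algebra ring.
Import Order.TTheory GRing.Theory Num.Theory.
Local Open Scope ring_scope.

(* ||Y||^2 is the Hermitian form of alpha for the Gram matrix
   G_kh = prod_l <y^(l)_k, y^(l)_h>.  In standard form the diagonal of G is 1
   and its off-diagonal entries have modulus at most mu'_Y, so
   ||Y||^2 >= ||alpha||^2 - mu'_Y sum_(k <> h) |alpha_k| |alpha_h|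
          >= (1 - (r-1) mu'_Y) ||alpha||^2,
   using 2 |alpha_k| |alpha_h| <= |alpha_k|^2 + |alpha_h|^2.  The other two
   bounds follow from mu'_Y <= prod_l mu_(Y,l) <= mu_Y^d, since
   t |-> 1 / (1 - (r-1) t) is nondecreasing where it is positive. *)

Lemma prodr_sum_dffun {R : comPzRingType} {I : finType} {T_ : I -> finType}
    (F : forall i, T_ i -> R) :
  \prod_i \sum_(j : T_ i) F i j =
  \sum_(f : {dffun forall i, T_ i}) \prod_i F i (f i).
Proof.
pose G i := [ffun j : T_ i => F i j].
transitivity (\prod_i \sum_(j in tagged_with T_ i) untag 0 (G i) j).
  apply: eq_bigr => i _; rewrite -(big_tag (fun i j => G i j)).
  by apply: eq_bigr => j _; rewrite ffunE.
rewrite bigA_distr_big_dep -(big_fprod 1 +%R G).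
rewrite (reindex (@fprod_of_dffun _ T_)); last exact/onW_bij/fprod_of_dffun_bij.
by apply: eq_bigr => f _; apply: eq_bigr => i _; rewrite fprodE ffunE.
Qed.

Section NonnegMax.
Context {R : numDomainType}.

Lemma bigmaxr_le {I : Type} {s : seq I} {P : pred I} {F : I -> R} c :
  0 <= c -> (forall i, P i -> F i <= c) ->
  \big[Num.max/0]_(i <- s | P i) F i <= c.
Proof.
move=> c_ge0 F_le; elim/big_rec: _ => // i m Pi m_le.
by rewrite /Num.max /Order.max; case: ifP => _; [apply: m_le | apply: F_le].
Qed.

Context {I : eqType} {s : seq I} {P : pred I} {F : I -> R}.
Hypothesis F_ge0 : forall i, P i -> 0 <= F i.

Lemma bigmaxr_ge0 : 0 <= \big[Num.max/0]_(i <- s | P i) F i.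
Proof.
elim/big_rec: _ => // i m Pi m_ge0.
have cmp : F i >=< m by rewrite real_comparable ?ger0_real ?F_ge0.
by rewrite comparable_le_max // m_ge0 orbT.
Qed.

Lemma ler_bigmaxr i : i \in s -> P i -> F i <= \big[Num.max/0]_(j <- s | P j) F j.
Proof.
elim: s => [|a t IHt] //; rewrite inE big_cons.
set m := \big[Num.max/0]_(j <- t | P j) F j.
have m_real : m \is Num.real.
  by apply: bigmax_real => // j Pj; apply/ger0_real/F_ge0.
have cmp j : P j -> F j >=< m.
  by move=> Pj; apply: real_comparable => //; apply/ger0_real/F_ge0.
case/orP=> [/eqP-> Pa|it Pi].
  by rewrite Pa (comparable_le_max _ (cmp _ Pa)) lexx.
case: ifP => Pa; last exact: IHt.
by rewrite (comparable_le_max _ (cmp _ Pa)) IHt ?orbT.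
Qed.

End NonnegMax.

Definition offdiag_max {R : numDomainType} {r : nat}
    (g : 'I_r -> 'I_r -> R) : R :=
  \big[Num.max/0]_(k < r) \big[Num.max/0]_(h < r | h != k) g k h.

Section OffdiagMax.
Context {R : numDomainType} {r : nat} {g : 'I_r -> 'I_r -> R}.
Hypothesis g_ge0 : forall k h, 0 <= g k h.

Lemma offdiag_max_ge0 : 0 <= offdiag_max g.
Proof. by apply: bigmaxr_ge0 => k _; apply: bigmaxr_ge0. Qed.

Lemma ler_offdiag_max k h : h != k -> g k h <= offdiag_max g.
Proof.
move=> hk; have row_ge0 k' : 0 <= \big[Num.max/0]_(h' < r | h' != k') g k' h'.
  exact: bigmaxr_ge0.
apply: le_trans (ler_bigmaxr (fun k' _ => row_ge0 k') k (mem_index_enum k) isT).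
exact: ler_bigmaxr (fun h' _ => g_ge0 k h') h (mem_index_enum h) hk.
Qed.

Lemma offdiag_max_le c : 0 <= c -> (forall k h, h != k -> g k h <= c) ->
  offdiag_max g <= c.
Proof.
move=> c_ge0 g_le; apply: bigmaxr_le => // k _.
by apply: bigmaxr_le => // h; apply: g_le.
Qed.

End OffdiagMax.

Lemma sum_offdiag_mul_le {R : numDomainType} {r : nat} (x : 'I_r -> R) :
  (forall k, x k \is Num.real) ->
  \sum_k \sum_(h | h != k) x k * x h <= r.-1%:R * \sum_k x k ^+ 2.
Proof.
case: r x => [|r] x x_real; first by rewrite !big_ord0 mulr0.
have row_sum k : \sum_(h < r.+1 | h != k) (x k ^+ 2 + x h ^+ 2) =
    r%:R * x k ^+ 2 + (\sum_h x h ^+ 2 - x k ^+ 2).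
  rewrite big_split /= sumr_const cardC1 card_ord mulr_natl; congr (_ + _).
  by rewrite [in RHS](bigD1 k) //= addrAC subrr add0r.
rewrite -(ler_pMn2r (n := 2)) // -sumrMnl.
apply: le_trans (_ : \sum_k \sum_(h | h != k) (x k ^+ 2 + x h ^+ 2) <= _).
  apply: ler_sum => k _; rewrite -sumrMnl; apply: ler_sum => h _.
  exact: real_leif_mean_square_scaled.
under eq_bigr do rewrite row_sum.
rewrite big_split /= -mulr_sumr sumrB /= sumr_const card_ord.
by rewrite mulrSr addrK mulr2n mulr_natl.
Qed.

Lemma ler_inv1B {R : numFieldType} (a b : R) : 0 < 1 - b -> a <= b ->
  (1 - a)^-1 <= (1 - b)^-1.
Proof.
move=> b_lt1 le_ab.
have le_1B : 1 - b <= 1 - a by rewrite lerD2l lerN2.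
by rewrite lef_pV2 ?posrE // (lt_le_trans b_lt1).
Qed.

Section CoherenceBound.
Context {C : numClosedFieldType} {d : nat} {n : 'I_d -> nat} {r : nat}.
Implicit Types (alpha : 'I_r -> C) (y : forall l : 'I_d, 'I_r -> 'I_(n l) -> C).

Lemma vdot_self m (x : 'I_m -> C) : vdot x x = \sum_j `|x j| ^+ 2.
Proof. by apply: eq_bigr => j _; rewrite normCK. Qed.

Lemma vnorm2_ge0 alpha : 0 <= vnorm2 alpha.
Proof. by rewrite /vnorm2 vdot_self sumr_ge0 // => k _; rewrite exprn_ge0. Qed.

Lemma tnorm2_ge0 (X : tensor C n) : 0 <= tnorm2 X.
Proof. by apply: sumr_ge0 => i _; apply: mul_conjC_ge0. Qed.

Definition gram y k h : C := \prod_(l < d) vdot (y l k) (y l h).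

Lemma tnorm2_cpd alpha y :
  tnorm2 (cpd alpha y) = \sum_k \sum_h alpha k * (alpha h)^* * gram y k h.
Proof.
rewrite /tnorm2 /tdot /cpd.
under eq_bigr do rewrite rmorph_sum mulr_suml; rewrite exchange_big /=.
apply: eq_bigr => k _.
under eq_bigr do rewrite mulr_sumr; rewrite exchange_big /=.
apply: eq_bigr => h _.
rewrite /gram /vdot prodr_sum_dffun mulr_sumr; apply: eq_bigr => i _.
by rewrite big_split /= rmorphM rmorph_prod /=; ring.
Qed.

Definition cpd_cross alpha y : C :=
  \sum_k \sum_(h | h != k) alpha k * (alpha h)^* * gram y k h.

Lemma tnorm2_cpd_standard alpha y : standard_form y ->
  tnorm2 (cpd alpha y) = vnorm2 alpha + cpd_cross alpha y.
Proof.
move=> y_std; rewrite tnorm2_cpd /vnorm2 /vdot /cpd_cross -big_split /=.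
apply: eq_bigr => k _; rewrite (bigD1 k) //=; congr (_ + _).
by rewrite /gram big1 ?mulr1 // => l _; apply: y_std.
Qed.

Lemma mu'E y : mu' y = offdiag_max (fun k h => `|gram y k h|).
Proof.
by apply: eq_bigr => k _; apply: eq_bigr => h _; rewrite normr_prod.
Qed.

Lemma mu'_ge0 y : 0 <= mu' y.
Proof. by rewrite mu'E offdiag_max_ge0. Qed.

Lemma norm_cpd_cross_le alpha y :
  `|cpd_cross alpha y| <= r.-1%:R * mu' y * vnorm2 alpha.
Proof.
have gram_le k h : h != k -> `|gram y k h| <= mu' y.
  by rewrite mu'E; apply: ler_offdiag_max.
apply: le_trans (ler_norm_sum _ _ _) _.
apply: le_trans
  (_ : \sum_k \sum_(h | h != k) `|alpha k| * `|alpha h| * mu' y <= _).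
  apply: ler_sum => k _; apply: le_trans (ler_norm_sum _ _ _) _.
  apply: ler_sum => h hk; rewrite !normrM norm_conjC.
  by apply: ler_wpM2l; [rewrite mulr_ge0 | apply: gram_le].
under eq_bigr do rewrite -mulr_suml.
rewrite -mulr_suml mulrAC ler_wpM2r ?mu'_ge0 // /vnorm2 vdot_self.
by apply: sum_offdiag_mul_le => k; apply: normr_real.
Qed.

Lemma vnorm2_le_tnorm2_cpd alpha y : standard_form y ->
  (1 - r.-1%:R * mu' y) * vnorm2 alpha <= tnorm2 (cpd alpha y).
Proof.
move=> y_std; rewrite tnorm2_cpd_standard // mulrBl mul1r lerD2l.
have cross_real : cpd_cross alpha y \is Num.real.
  have -> : cpd_cross alpha y = tnorm2 (cpd alpha y) - vnorm2 alpha.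
    by rewrite tnorm2_cpd_standard // addrAC subrr add0r.
  by rewrite rpredB ?ger0_real ?tnorm2_ge0 ?vnorm2_ge0.
exact/real_lerNnormlW/norm_cpd_cross_le.
Qed.

Lemma mu_l_ge0 y l : 0 <= mu_l y l.
Proof. exact: offdiag_max_ge0. Qed.

Lemma mu'_le_prod_mu_l y : mu' y <= \prod_(l < d) mu_l y l.
Proof.
rewrite mu'E; apply: offdiag_max_le => [|k h hk].
  by apply: prodr_ge0 => l _; apply: mu_l_ge0.
rewrite normr_prod; apply: ler_prod => l _; rewrite normr_ge0.
exact: ler_offdiag_max (fun _ _ => normr_ge0 _) _ _ hk.
Qed.

Lemma prod_mu_l_le_expr_mu y : \prod_(l < d) mu_l y l <= mu y ^+ d.
Proof.
rewrite -[d in mu y ^+ d]card_ord -prodr_const; apply: ler_prod => l _.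
rewrite mu_l_ge0 /=.
exact: ler_bigmaxr (fun l _ => mu_l_ge0 y l) l (mem_index_enum l) isT.
Qed.

End CoherenceBound.

Theorem lemma9 (C : numClosedFieldType) (d : nat) (n : 'I_d -> nat) (r : nat)
  (alpha : 'I_r -> C) (y : forall l : 'I_d, 'I_r -> 'I_(n l) -> C) :
  tensor_rank_eq (cpd alpha y) r ->
  standard_form y ->
  (r.-1)%:R * mu' y < 1 ->
  [/\ vnorm2 alpha <= (1 - (r.-1)%:R * mu' y)^-1 * tnorm2 (cpd alpha y),
      0 < 1 - (r.-1)%:R * \prod_(l < d) mu_l y l ->
        (1 - (r.-1)%:R * mu' y)^-1 * tnorm2 (cpd alpha y)
          <= (1 - (r.-1)%:R * \prod_(l < d) mu_l y l)^-1 * tnorm2 (cpd alpha y)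
    & 0 < 1 - (r.-1)%:R * mu y ^+ d ->
        (1 - (r.-1)%:R * \prod_(l < d) mu_l y l)^-1 * tnorm2 (cpd alpha y)
          <= (1 - (r.-1)%:R * mu y ^+ d)^-1 * tnorm2 (cpd alpha y)].
Proof.
move=> _ y_std mu'_lt1.
have T_ge0 := tnorm2_ge0 (cpd alpha y).
split=> [|prod_small|mu_small].
- by rewrite ler_pdivlMl ?subr_gt0 // vnorm2_le_tnorm2_cpd.
- apply: (ler_wpM2r T_ge0); apply: ler_inv1B; first exact: prod_small.
  by apply/ler_wpM2l/mu'_le_prod_mu_l.
- apply: (ler_wpM2r T_ge0); apply: ler_inv1B; first exact: mu_small.
  by apply/ler_wpM2l/prod_mu_l_le_expr_mu.
Qed.
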